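(* For every integer $s\geq 3$, the graph $\operatorname{KG}(2s+2,2)_{s-\operatorname{stab}}$ is not hom-idempotent, i.e., there is no homomorphism from $\operatorname{KG}(2s+2,2)_{s-\operatorname{stab}}\Box\operatorname{KG}(2s+2,2)_{s-\operatorname{stab}}$ to $\operatorname{KG}(2s+2,2)_{s-\operatorname{stab}}$.
   Context: For integers $s,k\geq 2$ and $n\geq ks$, a subset $S\subseteq[n]=\{1,\dots,n\}$ is $s$-stable if $s\leq |i-j|\leq n-s$ for all distinct $i,j\in S$. The $s$-stable Kneser graph $\operatorname{KG}(n,k)_{s-\operatorname{stab}}$ has as vertices the $s$-stable $k$-subsets of $[n]$, two vertices being adjacent iff they are disjoint. $G\Box H$ denotes the cartesian product of graphs (vertex set $V(G)\times V(H)$, $(g,h)\sim(g',h')$ iff one coordinate is equal and the other coordinates are adjacent). A homomorphism is an edge-preserving map between vertex sets. *)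

From mathcomp Require Import all_boot all_order.
Set Implicit Arguments. Unset Strict Implicit. Unset Printing Implicit Defensive.

(* [n] = {1..n} is represented by 'I_n = {0..n-1} (shift by one; differences
   |i - j| are unchanged). *)

Definition absdiff (i j : nat) : nat := (i - j) + (j - i).

Definition stable (n s : nat) (S : {set 'I_n}) : bool :=
  [forall i in S, forall j in S,
     (i != j) ==> ((s <= absdiff i j) && (absdiff i j <= n - s))].

Definition stab_vertex (n k s : nat) (S : {set 'I_n}) : bool :=
  (#|S| == k) && @stable n s S.

Definition SKG_V (n k s : nat) : Type := {S : {set 'I_n} | @stab_vertex n k s S}.

Definition SKG_adj (n k s : nat) (A B : SKG_V n k s) : bool :=
  [disjoint (val A) & (val B)].

Definition box_adj (V W : eqType) (e : V -> V -> bool) (f : W -> W -> bool)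
  (x y : V * W) : bool :=
  ((x.1 == y.1) && f x.2 y.2) || ((x.2 == y.2) && e x.1 y.1).

Definition is_hom (U V : Type) (eU : U -> U -> bool) (eV : V -> V -> bool)
  (phi : U -> V) : Prop :=
  forall x y, eU x y -> eV (phi x) (phi y).

From mathcomp Require Import all_boot all_order zify.

(* Every point q of the cycle Z/(2s+2) lies in exactly three vertices,
   {q, q+s}, {q, q+s+1} and {q, q+s+2}, and for s > 2 no three points are
   pairwise at distance s..s+2.  Hence a pairwise intersecting family of
   vertices has at most three members, with equality only for such a star, and
   double counting shows that every fibre {y | p \in f y} of an endomorphism f
   is a star.  For a homomorphism phi from the square, the fibre of the point 0
   along row x is a star with some centre c(x), while along the column at
   {a, a+s+d} it is {x | c(x) \in {a, a+s+d}}, again of size 3.  So the number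
   N(a) of rows centred at a satisfies N(a) + N(a+s) = N(a) + N(a+s+1) = 3:
   N is constant and 2 N(0) = 3. *)

Set Implicit Arguments. Unset Strict Implicit. Unset Printing Implicit Defensive.

Lemma card_sum_indicator (T : finType) (A : {set T}) : #|A| = \sum_x (x \in A : nat).
Proof. by rewrite -sum1_card big_mkcond. Qed.

Lemma double_count (I J : finType) (R : I -> J -> bool) :
  \sum_i #|[set j | R i j]| = \sum_j #|[set i | R i j]|.
Proof.
under eq_bigr do rewrite card_sum_indicator.
rewrite exchange_big /=; apply: eq_bigr => j _.
by rewrite card_sum_indicator; apply: eq_bigr => i _; rewrite !inE.
Qed.

Lemma absdiffC i j : absdiff i j = absdiff j i.
Proof. exact: addnC. Qed.

Lemma no_stable_triangle s (a b c : nat) : 2 < s ->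
  s <= absdiff a b <= s + 2 -> s <= absdiff a c <= s + 2 ->
  s <= absdiff b c <= s + 2 -> False.
Proof. rewrite /absdiff; lia. Qed.

Lemma stable_set2 n s (a b : 'I_n) : s <= absdiff a b <= n - s -> stable s [set a; b].
Proof.
move=> ab; apply/forallP => i; apply/implyP; rewrite !inE => /orP [] /eqP ->;
  apply/forallP => j; apply/implyP; rewrite !inE => /orP [] /eqP ->;
  by rewrite ?eqxx //= ?(absdiffC b) ab implybT.
Qed.

Section CyclicShift.
Variables (n : nat) (n_gt0 : 0 < n).

Definition shift (a : 'I_n) (k : nat) : 'I_n := Ordinal (ltn_pmod (a + k) n_gt0).

Lemma shiftA (a : 'I_n) i j : shift (shift a i) j = shift a (i + j).
Proof. by apply: val_inj; rewrite /= modnDml addnA. Qed.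

Lemma shiftDn (a : 'I_n) k : shift a (k + n) = shift a k.
Proof. by apply: val_inj; rewrite /= addnA modnDr. Qed.

Lemma shift0 (a : 'I_n) : shift a 0 = a.
Proof. by apply: val_inj; rewrite /= addn0 modn_small. Qed.

Lemma shift_inj (a : 'I_n) i j : i < n -> j < n -> shift a i = shift a j -> i = j.
Proof.
move=> ilt jlt /(congr1 val) /= /eqP.
by rewrite eqn_modDl !modn_small // => /eqP.
Qed.

Lemma shift_val (a : 'I_n) k : k <= n ->
  shift a k = (if a + k < n then a + k else a + k - n) :> nat.
Proof.
move=> kn; have an := ltn_ord a; rewrite /=; case: ltnP => h; first exact: modn_small.
by rewrite -{1}(subnK h) modnDr modn_small //; lia.
Qed.

Lemma absdiff_shift (a : 'I_n) k : k <= n ->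
  absdiff a (shift a k) = if a + k < n then k else n - k.
Proof. by move=> kn; rewrite shift_val // /absdiff; case: ltnP; lia. Qed.

Lemma shift_diff (a b : 'I_n) :
  b = shift a (if a <= b then b - a else n - (a - b)).
Proof.
have an := ltn_ord a; have bn := ltn_ord b.
set k := (if a <= b then _ else _).
have kn : k <= n by rewrite /k; case: (leqP a b); lia.
apply: val_inj; rewrite /= -[_ %% n]/(shift a k : nat) shift_val // /k.
by case: (leqP a b) => ?; case: ltnP; lia.
Qed.

End CyclicShift.

Section StableKneser.
Variable s : nat.
Hypothesis s_gt2 : 2 < s.
Local Notation n := (2 * s + 2).
Local Notation V := (SKG_V n 2 s).
Local Notation adj := (@SKG_adj n 2 s).

Lemma n_gt0 : 0 < n. Proof. lia. Qed.
Local Notation shift := (shift n_gt0).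

Lemma card_vertex (y : V) : #|val y| = 2.
Proof. by case: y => S /= /andP [/eqP]. Qed.

Lemma absdiff_vertex (y : V) (i j : 'I_n) : i \in val y -> j \in val y -> i != j ->
  s <= absdiff i j <= s + 2.
Proof.
case: y => S /= /andP [_ /forallP stS] iS jS ij.
move: (stS i); rewrite iS => /forallP /(_ j); rewrite jS ij /= => /andP [? ?].
by apply/andP; split; lia.
Qed.

Lemma vertex_pair (y : V) (a b : 'I_n) : a \in val y -> b \in val y -> a != b ->
  val y = [set a; b].
Proof.
move=> ay yb ab; apply/esym/eqP; rewrite eqEcard card_vertex cards2 ab andbT.
by apply/subsetP => x; rewrite !inE => /orP [] /eqP ->.
Qed.

Lemma adjPn (y y' : V) : reflect (exists2 q, q \in val y & q \in val y') (~~ adj y y').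
Proof.
rewrite /SKG_adj -setI_eq0; apply: (iffP (set0Pn _)) => [[q]|[q qy qy']].
  by rewrite inE => /andP [qy qy']; exists q.
by exists q; rewrite inE qy qy'.
Qed.

Lemma stable_chord (a : 'I_n) (d : 'I_3) : @stab_vertex n 2 s [set a; shift a (s + d)].
Proof.
have dist := absdiff_shift n_gt0 a (_ : s + d <= n).
have dist_ad : s <= absdiff a (shift a (s + d)) <= n - s.
  by have d3 := ltn_ord d; rewrite dist; [case: ltnP; lia | lia].
have ad : a != shift a (s + d).
  by apply: contraTneq dist_ad => <-; rewrite /absdiff subnn; lia.
by rewrite /stab_vertex cards2 ad stable_set2.
Qed.

Definition chord (a : 'I_n) (d : 'I_3) : V := exist (@stab_vertex n 2 s) _ (stable_chord a d).

Local Notation fiber f p := [set y : V | p \in val (f y)].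
Local Notation star q := (fiber id q).

Lemma vertex_other (y : V) q : q \in val y -> exists2 b, b \in val y & q != b.
Proof.
move=> qy; have : 0 < #|val y :\ q|.
  by move: (cardsD1 q (val y)); rewrite qy card_vertex add1n => -[<-].
by case/card_gt0P => b; rewrite !inE => /andP [bq yb]; exists b; rewrite // eq_sym.
Qed.

Lemma vertex_chord (y : V) q : q \in val y -> exists d, y = chord q d.
Proof.
move=> qy; have [b yb qb] := vertex_other qy.
have qb_dist := absdiff_vertex qy yb qb.
have b_shift := shift_diff n_gt0 q b.
set k := (if q <= b then _ else _) in b_shift.
have kd : k - s < 3 by move: qb_dist; rewrite /k /absdiff; case: (leqP q b); lia.
have sk : s + (k - s) = k by move: qb_dist; rewrite /k /absdiff; case: (leqP q b); lia.
exists (Ordinal kd); apply: val_inj; rewrite (vertex_pair qy yb qb) /=.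
by rewrite sk -b_shift.
Qed.

Lemma chord_inj (a : 'I_n) : injective (chord a).
Proof.
move=> d d' /(congr1 val) /= chord_eq.
have dn (e : 'I_3) : s + e < n by have := ltn_ord e; lia.
have : shift a (s + d) \in [set a; shift a (s + d')] by rewrite -chord_eq !inE eqxx orbT.
rewrite !inE => /orP [] /eqP shift_eq.
- by move: shift_eq; rewrite -{2}(shift0 n_gt0 a) => /(shift_inj (dn d) n_gt0); lia.
- exact/val_inj/addnI/(shift_inj (dn d) (dn d') shift_eq).
Qed.

Lemma card_star q : #|star q| = 3.
Proof.
have -> : star q = chord q @: setT.
  apply/setP => y; rewrite !inE; apply/idP/imsetP => [/vertex_chord [d ->]|[d _ ->]].
    by exists d.
  by rewrite !inE eqxx.
by rewrite card_imset ?cardsT ?card_ord //; apply: chord_inj.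
Qed.

Definition intersecting (T : {set V}) := {in T &, forall y y', y != y' -> ~~ adj y y'}.

Lemma intersecting_sub_star (T : {set V}) :
  intersecting T -> 1 < #|T| -> exists q, T \subset star q.
Proof.
move=> T_int /card_gt1P [y1 [y2 [y1T y2T y12]]].
have [q qy1 qy2] := adjPn _ _ (T_int _ _ y1T y2T y12).
exists q; apply/subsetP => y yT; rewrite inE; apply: contraT => qy.
have y1y : y != y1 by apply: contraNneq qy => ->.
have y2y : y != y2 by apply: contraNneq qy => ->.
have [c cy cy1] := adjPn _ _ (T_int _ _ yT y1T y1y).
have [d dy dy2] := adjPn _ _ (T_int _ _ yT y2T y2y).
have qc : q != c by apply: contraNneq qy => ->.
have qd : q != d by apply: contraNneq qy => ->.
have cd : c != d.
  apply: contraNneq y12 => ed; apply/eqP/val_inj.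
  by rewrite (vertex_pair qy1 cy1 qc) (vertex_pair qy2 _ qc) // ed.
by case: (no_stable_triangle s_gt2 (absdiff_vertex qy1 cy1 qc)
          (absdiff_vertex qy2 dy2 qd) (absdiff_vertex cy dy cd)).
Qed.

Lemma intersecting_card_le3 (T : {set V}) : intersecting T -> #|T| <= 3.
Proof.
move=> T_int; case: (leqP #|T| 1) => [|/(intersecting_sub_star T_int) [q sub]]; first lia.
by rewrite -(card_star q) subset_leq_card.
Qed.

Lemma intersecting_card3 (T : {set V}) :
  intersecting T -> #|T| = 3 -> exists q, T = star q.
Proof.
move=> T_int T3; have [|q sub] := intersecting_sub_star T_int; first by rewrite T3.
by exists q; apply/eqP; rewrite eqEcard sub card_star T3.
Qed.

Lemma intersecting_fiber (f : V -> V) p : is_hom adj adj f -> intersecting (fiber f p).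
Proof.
move=> f_hom y y'; rewrite !inE => py py' _.
by apply: contra (f_hom y y') _; apply/adjPn; exists p.
Qed.

Lemma sum_card_fiber (f : V -> V) : \sum_p #|fiber f p| = #|{: V}| * 2.
Proof.
rewrite (double_count (fun p y => p \in val (f y))) -sum_nat_const.
by apply: eq_bigr => y _; rewrite -[RHS](card_vertex (f y)); apply: eq_card => p; rewrite inE.
Qed.

Lemma hom_fiber_star (f : V -> V) : is_hom adj adj f -> forall p, exists q, fiber f p = star q.
Proof.
move=> f_hom p; apply: intersecting_card3; first exact: intersecting_fiber.
have le3 r : #|fiber f r| <= 3 ?= iff (#|fiber f r| == 3).
  exact/leqif_eq/intersecting_card_le3/intersecting_fiber.
have [_] := @leqif_sum _ predT _ _ (fun=> 3) (fun r _ => le3 r).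
rewrite [X in X == _]sum_card_fiber -(sum_card_fiber id).
under [X in _ == X]eq_bigr => i _ do rewrite -(card_star i).
by rewrite eqxx => /esym/forall_inP/(_ p isT)/eqP.
Qed.

Section BoxHom.
Variable phi : V * V -> V.
Hypothesis phi_hom : is_hom (box_adj adj adj) adj phi.

Lemma row_hom x : is_hom adj adj (fun y => phi (x, y)).
Proof. by move=> y y' yy'; apply: phi_hom; rewrite /box_adj /= eqxx yy'. Qed.

Lemma col_hom y : is_hom adj adj (fun x => phi (x, y)).
Proof. by move=> x x' xx'; apply: phi_hom; rewrite /box_adj /= eqxx xx' orbT. Qed.

Let p0 : 'I_n := Ordinal n_gt0.

Lemma row_fiber_star x : exists q, fiber (fun y => phi (x, y)) p0 == star q.
Proof. by have [q ->] := hom_fiber_star (row_hom x) p0; exists q. Qed.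

Let center x := xchoose (row_fiber_star x).

Let load a := #|[set x | center x == a]|.

Lemma load_chord a (d : 'I_3) : load a + load (shift a (s + d)) = 3.
Proof.
have [q col_star] := hom_fiber_star (col_hom (chord a d)) p0.
have a_ne : a != shift a (s + d).
  by apply/eqP => ea; move: (card_vertex (chord a d)); rewrite /= -ea setUid cards1.
rewrite -[RHS](card_star q) -col_star -cardsUI.
have -> : [set x | center x == a] :&: [set x | center x == shift a (s + d)] = set0.
  by apply/setP => x; rewrite !inE; apply: contraNF a_ne => /andP [/eqP <- /eqP <-].
rewrite cards0 addn0; apply: eq_card => x; rewrite !inE.
have /eqP/setP/(_ (chord a d)) := xchooseP (row_fiber_star x).
by rewrite !inE.
Qed.

Lemma load_shift1 b : load (shift b 1) = load b.
Proof.
have := load_chord (shift b (s + 2)) ord0.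
have := load_chord (shift b (s + 2)) (@Ordinal 3 1 isT).
rewrite /= !shiftA.
have -> : s + 2 + (s + 1) = 1 + n by lia.
have -> : s + 2 + (s + 0) = 0 + n by lia.
rewrite !shiftDn shift0; lia.
Qed.

Lemma load_const a : load a = load p0.
Proof.
have -> : a = shift p0 a by apply: val_inj; rewrite /= add0n modn_small.
elim: (nat_of_ord a) => [|j IH]; first by rewrite shift0.
by rewrite -[j.+1]addn1 -shiftA load_shift1.
Qed.

Lemma box_square_hom_False : False.
Proof.
have := load_chord p0 ord0; rewrite (load_const (shift _ _)); lia.
Qed.

End BoxHom.

End StableKneser.

Theorem mainTheorem5 (s : nat) : 3 <= s ->
  ~ exists phi : SKG_V (2 * s + 2) 2 s * SKG_V (2 * s + 2) 2 s ->
                 SKG_V (2 * s + 2) 2 s,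
      is_hom (box_adj (@SKG_adj (2 * s + 2) 2 s) (@SKG_adj (2 * s + 2) 2 s))
             (@SKG_adj (2 * s + 2) 2 s) phi.
Proof. by move=> s_gt2 [phi phi_hom]; apply: (box_square_hom_False s_gt2 phi_hom). Qed.
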